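(* Assume $\ker(K)\cap\ker(D)=\{0\}$. Fix $\delta\ge0$ and a vector of observations $y^\delta=Kx^{GT}+e$ with $\|e\|_2\le\delta$. Let $\{\Psi_k\}_{k\in\mathbb{N}}$ be a sequence of reconstructors such that one of the following holds: 1. $\|\Psi_k(y^\delta)-x^{GT}\|_1\to0$ as $k\to\infty$; 2. $\|\,|D\Psi_k(y^\delta)|-|Dx^{GT}|\,\|_1\to0$ as $k\to\infty$. For each $k$ let $x^*_{\Psi_k,\delta}$ be the unique minimizer over $\mathcal{X}$ of $\mathcal{J}_{\Psi_k,\delta}(x)=\|Kx-y^\delta\|_2^2+\lambda\|w(\Psi_k(y^\delta))\odot|Dx|\|_1$, and let $x^*_{GT,\delta}$ denote the unique minimizer over $\mathcal{X}$ of $\mathcal{J}_{GT,\delta}(x)=\|Kx-y^\delta\|_2^2+\lambda\|w(x^{GT})\odot|Dx|\|_1$. Then $\{x^*_{\Psi_k,\delta}\}_{k\in\mathbb{N}}$ has a convergent subsequence whose limit is $x^*_{GT,\delta}$.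
   Context: Let $K\in\mathbb{R}^{m\times n}$ with $m\le n$, and let $D_h,D_v\in\mathbb{R}^{n\times n}$ be the discrete horizontal and vertical difference operators; $Dx=\begin{bmatrix}D_hx\\ D_vx\end{bmatrix}\in\mathbb{R}^{2n}$, and $|Dx|\in\mathbb{R}^n$, $(|Dx|)_i=\sqrt{(D_hx)_i^2+(D_vx)_i^2}$. $\mathcal{X}=\{x\in\mathbb{R}^n: x_i\ge 0\ \forall i\}$ and $x^{GT}\in\mathcal{X}$ is the ground truth. Fix $\lambda>0$, $\eta>0$, $p\in(0,1)$, and for $\tilde x\in\mathbb{R}^n$ define $(w(\tilde{x}))_i=\big(\eta/\sqrt{\eta^2+(|D\tilde{x}|)_i^2}\big)^{1-p}$. A reconstructor is a Lipschitz continuous map $\Psi:\mathbb{R}^m\to\mathbb{R}^n$. $\odot$ is the entrywise product. *)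

From HB Require Import structures.
From mathcomp Require Import all_boot all_order all_algebra.
From mathcomp Require Import all_classical all_reals all_analysis.
Set Implicit Arguments. Unset Strict Implicit. Unset Printing Implicit Defensive.
Import Order.TTheory GRing.Theory Num.Theory.
Import numFieldNormedType.Exports.
Local Open Scope ring_scope.

Section Defs.
Variable R : realType.

Definition l1norm (k : nat) (v : 'cV[R]_k) : R := \sum_(i < k) `|v i 0|.
Definition l2norm (k : nat) (v : 'cV[R]_k) : R := Num.sqrt (\sum_(i < k) (v i 0) ^+ 2).

(* |Dx|, with Dx = [Dh x; Dv x] *)
Definition absD (n : nat) (Dh Dv : 'M[R]_n) (x : 'cV[R]_n) : 'cV[R]_n :=
  \col_i Num.sqrt (((Dh *m x) i 0) ^+ 2 + ((Dv *m x) i 0) ^+ 2).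

Definition hadamard (n : nat) (a b : 'cV[R]_n) : 'cV[R]_n := \col_i (a i 0 * b i 0).

Definition weight (n : nat) (Dh Dv : 'M[R]_n) (eta p : R) (xt : 'cV[R]_n) : 'cV[R]_n :=
  \col_i powR (eta / Num.sqrt (eta ^+ 2 + (absD Dh Dv xt i 0) ^+ 2)) (1 - p).

Definition Jfun (m n : nat) (K : 'M[R]_(m, n)) (Dh Dv : 'M[R]_n) (lam eta p : R)
  (y : 'cV[R]_m) (xt : 'cV[R]_n) (x : 'cV[R]_n) : R :=
  (l2norm (K *m x - y)) ^+ 2 + lam * l1norm (hadamard (weight Dh Dv eta p xt) (absD Dh Dv x)).

Definition nonneg_orthant (n : nat) (x : 'cV[R]_n) : Prop := forall i, 0 <= x i 0.

Definition is_minimizer_on (n : nat) (C : 'cV[R]_n -> Prop) (F : 'cV[R]_n -> R) (x : 'cV[R]_n) :=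
  C x /\ (forall z, C z -> F x <= F z).

Definition is_unique_minimizer_on (n : nat) (C : 'cV[R]_n -> Prop) (F : 'cV[R]_n -> R) (x : 'cV[R]_n) :=
  is_minimizer_on C F x /\ (forall z, is_minimizer_on C F z -> z = x).

Definition lipschitz_map (m n : nat) (Psi : 'cV[R]_m -> 'cV[R]_n) : Prop :=
  exists L : R, 0 <= L /\ forall a b, l2norm (Psi a - Psi b) <= L * l2norm (a - b).

End Defs.

From HB Require Import structures.
From mathcomp Require Import all_boot all_order all_algebra.
From mathcomp Require Import all_classical all_reals all_analysis.
From mathcomp Require Import lra.
Import Order.TTheory GRing.Theory Num.Theory.
Import numFieldNormedType.Exports.
Local Open Scope classical_set_scope.
Local Open Scope ring_scope.

(** Either hypothesis on the reconstructors makes [|D Psi_k(y)|] converge to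
    [|D xGT|] entrywise, so the weights [w(Psi_k(y))] converge to the positive
    weights [w(xGT)] and are eventually bounded below by half of them.  Since
    [J_k(x*_k) <= J_k(0) = ||y||^2], this bounds [K x*_k] and [|D x*_k|]
    uniformly, and the kernel condition turns this into a bound on [x*_k].
    By Bolzano-Weierstrass a subsequence converges; along it [J_k] converges to
    [J_GT] both at the minimizers and at every fixed point, so the limit
    minimizes [J_GT] over the closed orthant and is [x*_GT] by uniqueness. *)

Lemma ler_sum_term (R : numDomainType) n (F : 'I_n -> R) i :
  (forall j, 0 <= F j) -> F i <= \sum_(j < n) F j.
Proof. by move=> F_ge0; rewrite (bigD1 i) //= lerDl sumr_ge0. Qed.

Lemma increasing_seq_cvg_oo {f : nat -> nat} : increasing_seq f -> f @ \oo --> \oo.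
Proof.
move=> /increasing_seqP f_incr.
have le_f k : (k <= f k)%N by elim: k => // k IH; exact: leq_ltn_trans IH (f_incr k).
by move=> P [N _ NP]; exists N => // k /= Nk; apply: NP; exact: leq_trans Nk (le_f k).
Qed.

Lemma mx_inj_entry_bound (R : realFieldType) m n (A : 'M[R]_(m, n)) :
  (forall x : 'cV_n, A *m x = 0 -> x = 0) ->
  exists C : R, forall (x : 'cV_n) (T : R), 0 <= T ->
    (forall i, `|(A *m x) i 0| <= T) -> forall j, `|x j 0| <= C * T.
Proof.
move=> A_inj.
have /row_fullP [B BA] : row_full A.
  suff : row_free A^T by rewrite /row_free /row_full mxrank_tr.
  apply/inj_row_free => v /(congr1 trmx); rewrite trmx_mul trmxK trmx0 => /A_inj vT0.
  by rewrite -[v]trmxK vT0 trmx0.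
exists (\sum_j \sum_i `|B j i|) => x T T_ge0 AxT j.
have -> : x = B *m (A *m x) by rewrite mulmxA BA mul1mx.
rewrite mxE; apply: le_trans (ler_norm_sum _ _ _) _.
apply: (@le_trans _ _ ((\sum_i `|B j i|) * T)).
  by rewrite mulr_suml; apply: ler_sum => i _; rewrite normrM ler_wpM2l.
apply: ler_wpM2r => //; apply: (@ler_sum_term R _ (fun j => \sum_i `|B j i|)) => k.
exact: sumr_ge0.
Qed.

Lemma norm_col_mx_le (R : numDomainType) m1 m2 (a : 'cV[R]_m1) (b : 'cV[R]_m2)
    (T : R) :
  (forall i, `|a i 0| <= T) -> (forall i, `|b i 0| <= T) ->
  forall i, `|col_mx a b i 0| <= T.
Proof.
move=> aT bT i; rewrite -(fintype.splitK i).
by case: (fintype.split i) => k /=; rewrite ?col_mxEu ?col_mxEd; [exact: aT|exact: bT].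
Qed.

Section Entrywise.
Context {R : realType}.

Lemma norm_entry_le_l1norm {k} (v : 'cV[R]_k) i : `|v i 0| <= l1norm v.
Proof. exact: (@ler_sum_term R _ (fun j => `|v j 0|)). Qed.

Lemma l2norm_ge0 {k} (v : 'cV[R]_k) : 0 <= l2norm v.
Proof. exact: sqrtr_ge0. Qed.

Lemma norm_entry_le_l2norm {k} (v : 'cV[R]_k) i : `|v i 0| <= l2norm v.
Proof.
rewrite -sqrtr_sqr; apply: ler_wsqrtr.
exact: (@ler_sum_term R _ (fun j => v j 0 ^+ 2) _ (fun j => sqr_ge0 _)).
Qed.

Lemma l2normN {k} (v : 'cV[R]_k) : l2norm (- v) = l2norm v.
Proof. by rewrite /l2norm; under eq_bigr do rewrite mxE sqrrN. Qed.

Lemma cvg_sum {n} (u : 'I_n -> nat -> R) (l : 'I_n -> R) :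
  (forall i, u i @ \oo --> l i) ->
  (fun k => \sum_(i < n) u i k) @ \oo --> \sum_(i < n) l i.
Proof.
move=> ul.
by apply: cvg_big => [|i _]; [exact: add_continuous | exact: ul].
Qed.

Definition entrywise_cvg {n} (u : nat -> 'cV[R]_n) (l : 'cV[R]_n) :=
  forall i, (fun k => u k i 0) @ \oo --> l i 0.

Lemma entrywise_cvg_cst {n} (l : 'cV[R]_n) : entrywise_cvg (fun=> l) l.
Proof. by move=> i; exact: cvg_cst. Qed.

Lemma entrywise_cvg_comp {n} {u : nat -> 'cV[R]_n} {l f} :
  f @ \oo --> \oo -> entrywise_cvg u l -> entrywise_cvg (u \o f) l.
Proof. by move=> f_oo ul i; exact: cvg_comp f_oo (ul i). Qed.

Lemma entrywise_cvgB {n} {u v : nat -> 'cV[R]_n} {l l'} :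
  entrywise_cvg u l -> entrywise_cvg v l' ->
  entrywise_cvg (fun k => u k - v k) (l - l').
Proof.
by move=> ul vl' i; rewrite !mxE; under eq_cvg do rewrite !mxE; exact: cvgB.
Qed.

Lemma entrywise_cvg_hadamard {n} {u v : nat -> 'cV[R]_n} {l l'} :
  entrywise_cvg u l -> entrywise_cvg v l' ->
  entrywise_cvg (fun k => hadamard (u k) (v k)) (hadamard l l').
Proof.
by move=> ul vl' i; rewrite mxE; under eq_cvg do rewrite mxE; exact: cvgM.
Qed.

Lemma entrywise_cvg_mulmx {m n} (A : 'M[R]_(m, n)) {u l} :
  entrywise_cvg u l -> entrywise_cvg (fun k => A *m u k) (A *m l).
Proof.
move=> ul i; rewrite mxE; under eq_cvg do rewrite mxE.
by apply: cvg_sum => j; apply: cvgM; [exact: cvg_cst | exact: ul].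
Qed.

Lemma entrywise_cvg_absD {n} (Dh Dv : 'M[R]_n) {u l} : entrywise_cvg u l ->
  entrywise_cvg (fun k => absD Dh Dv (u k)) (absD Dh Dv l).
Proof.
move=> ul i; rewrite mxE; under eq_cvg do rewrite mxE.
apply: (continuous_cvg _ (@sqrt_continuous R _)).
have Dhu := entrywise_cvg_mulmx Dh ul i; have Dvu := entrywise_cvg_mulmx Dv ul i.
by apply: cvgD; apply: cvgM.
Qed.

Lemma cvg_l1norm {n} {u : nat -> 'cV[R]_n} {l} :
  entrywise_cvg u l -> (fun k => l1norm (u k)) @ \oo --> l1norm l.
Proof. by move=> ul; apply: cvg_sum => i; exact: cvg_norm. Qed.

Lemma cvg_l2norm {n} {u : nat -> 'cV[R]_n} {l} :
  entrywise_cvg u l -> (fun k => l2norm (u k)) @ \oo --> l2norm l.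
Proof.
move=> ul; apply: (continuous_cvg _ (@sqrt_continuous R _)).
by apply: cvg_sum => i; apply: cvgM.
Qed.

Lemma l1norm_cvg0P {n} {u : nat -> 'cV[R]_n} {l} :
  (fun k => l1norm (u k - l)) @ \oo --> 0 <-> entrywise_cvg u l.
Proof.
split=> [ul i|ul].
- apply/cvgrPdist_lt => e e0; move/cvgrPdist_lt: ul => /(_ e e0).
  apply: filterS => k; rewrite sub0r normrN ger0_norm ?sumr_ge0 // => lt_e.
  rewrite distrC; apply: le_lt_trans lt_e.
  by have := norm_entry_le_l1norm (u k - l) i; rewrite !mxE.
- have := cvg_l1norm (entrywise_cvgB ul (entrywise_cvg_cst l)).
  by rewrite subrr /l1norm big1 // => i _; rewrite mxE normr0.
Qed.

Lemma nonneg_orthant_entrywise_lim {n} {u : nat -> 'cV[R]_n} {l} :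
  (forall k, nonneg_orthant (u k)) -> entrywise_cvg u l -> nonneg_orthant l.
Proof.
move=> u_ge0 ul i; apply: (ler_cvg_to (cvg_cst 0) (ul i)).
by apply: filterE => k; exact: u_ge0.
Qed.

Lemma bounded_entrywise_cvg_subseq {n} {u : nat -> 'cV[R]_n} {M : R} :
  (forall k i, `|u k i 0| <= M) ->
  exists2 f : nat -> nat, increasing_seq f & exists l, entrywise_cvg (u \o f) l.
Proof.
move=> uM.
suff [f f_incr f_cvg] : exists2 f : nat -> nat, increasing_seq f &
    forall i : 'I_n, cvgn (fun k => u (f k) i 0).
  exists f => //; exists (\col_i lim ((fun k => u (f k) i 0) @ \oo)) => i.
  by rewrite mxE; exact: f_cvg.
suff /(_ n (leqnn n)) [f f_incr f_cvg] : forall j, (j <= n)%N ->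
    exists2 f : nat -> nat, increasing_seq f &
    forall i : 'I_n, (i < j)%N -> cvgn (fun k => u (f k) i 0).
  by exists f => // i; exact: f_cvg.
elim=> [_|j IH jn]; first by exists id.
have [f f_incr f_cvg] := IH (ltnW jn).
have bounded_j : bounded_fun (fun k => u (f k) (Ordinal jn) 0).
  exists M; split; first exact: num_real.
  by move=> z Mz k _ /=; rewrite (le_trans (uM _ _)) // ltW.
have [h h_incr h_cvg] := bolzano_weierstrass bounded_j.
exists (f \o h) => [a b|i]; first by rewrite /= f_incr -leEnat h_incr.
rewrite ltnS leq_eqVlt => /orP[/eqP ij|ij].
  by have -> : i = Ordinal jn by exact: val_inj.
apply/cvg_ex; exists (lim ((fun k => u (f k) i 0) @ \oo)).
exact: cvg_comp (increasing_seq_cvg_oo h_incr) (f_cvg i ij).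
Qed.

End Entrywise.

Lemma is_minimizer_on_lim {R : realType} {n} {C : 'cV[R]_n -> Prop}
    {F_ : nat -> 'cV[R]_n -> R} {F : 'cV[R]_n -> R} {x_ : nat -> 'cV[R]_n} {x} :
  C x -> (forall k, is_minimizer_on C (F_ k) (x_ k)) ->
  (fun k => F_ k (x_ k)) @ \oo --> F x ->
  (forall z, C z -> (fun k => F_ k z) @ \oo --> F z) ->
  is_minimizer_on C F x.
Proof.
move=> Cx x_min Fx Fz; split=> // z Cz.
apply: (ler_cvg_to Fx (Fz z Cz)); apply: filterE => k.
exact: (x_min k).2.
Qed.

Section Functional.
Context {R : realType} {m n : nat} {K : 'M[R]_(m, n)} {Dh Dv : 'M[R]_n}.
Context {lam eta p : R} {y : 'cV[R]_m}.
Hypothesis eta_gt0 : 0 < eta.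

Local Notation J := (Jfun K Dh Dv lam eta p y).
Local Notation w := (weight Dh Dv eta p).

Lemma weight_base_gt0 (a : R) : 0 < eta / Num.sqrt (eta ^+ 2 + a ^+ 2).
Proof. by rewrite divr_gt0 // sqrtr_gt0 ltr_wpDr ?sqr_ge0 ?exprn_gt0. Qed.

Lemma weight_gt0 xt i : 0 < w xt i 0.
Proof. by rewrite mxE powR_gt0 ?weight_base_gt0. Qed.

Lemma norm_mulmx_le_absD x i :
  `|(Dh *m x) i 0| <= absD Dh Dv x i 0 /\ `|(Dv *m x) i 0| <= absD Dh Dv x i 0.
Proof.
have -> : absD Dh Dv x i 0 = Num.sqrt ((Dh *m x) i 0 ^+ 2 + (Dv *m x) i 0 ^+ 2).
  by rewrite mxE.
by rewrite -!sqrtr_sqr; split; apply: ler_wsqrtr; rewrite ?lerDl ?lerDr sqr_ge0.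
Qed.

Lemma cvg_weight_profile (t : nat -> R) (a : R) : t @ \oo --> a ->
  (fun k => powR (eta / Num.sqrt (eta ^+ 2 + t k ^+ 2)) (1 - p)) @ \oo -->
  powR (eta / Num.sqrt (eta ^+ 2 + a ^+ 2)) (1 - p).
Proof.
move=> ta.
have powRE (s : R) : powR (eta / Num.sqrt (eta ^+ 2 + s ^+ 2)) (1 - p) =
    expR ((1 - p) * ln (eta / Num.sqrt (eta ^+ 2 + s ^+ 2))).
  by rewrite /powR gt_eqF ?weight_base_gt0.
rewrite powRE; under eq_cvg do rewrite powRE.
apply: (continuous_cvg _ (@continuous_expR R _)); apply: cvgM; first exact: cvg_cst.
apply: (continuous_cvg _ (continuous_ln (weight_base_gt0 _))).
apply: cvgM; first exact: cvg_cst.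
apply: cvgV; first by rewrite gt_eqF // sqrtr_gt0 ltr_wpDr ?sqr_ge0 ?exprn_gt0.
apply: (continuous_cvg _ (@sqrt_continuous R _)).
by apply: cvgD; [exact: cvg_cst | exact: cvgM].
Qed.

Lemma entrywise_cvg_weight {xt_ : nat -> 'cV[R]_n} {xt} :
  entrywise_cvg (fun k => absD Dh Dv (xt_ k)) (absD Dh Dv xt) ->
  entrywise_cvg (fun k => w (xt_ k)) (w xt).
Proof.
move=> cvg_abs i; rewrite mxE; under eq_cvg do rewrite mxE.
exact: cvg_weight_profile (cvg_abs i).
Qed.

Lemma weight_eventually_ge {xt_ : nat -> 'cV[R]_n} {xt} :
  entrywise_cvg (fun k => absD Dh Dv (xt_ k)) (absD Dh Dv xt) ->
  \forall k \near \oo, forall i, w xt i 0 / 2 <= w (xt_ k) i 0.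
Proof.
move=> cvg_abs; apply: filter_forall => i.
have half_lt : w xt i 0 / 2 < w xt i 0.
  by rewrite ltr_pdivrMr // ltr_pMr ?weight_gt0 // ltr1n.
exact: cvgr_ge (entrywise_cvg_weight cvg_abs i) _ half_lt.
Qed.

Lemma cvg_Jfun (xt_ x_ : nat -> 'cV[R]_n) xt x :
  entrywise_cvg (fun k => absD Dh Dv (xt_ k)) (absD Dh Dv xt) ->
  entrywise_cvg x_ x -> (fun k => J (xt_ k) (x_ k)) @ \oo --> J xt x.
Proof.
move=> cvg_abs cvg_x; rewrite /Jfun; apply: cvgD.
  have cvg_res := entrywise_cvgB (entrywise_cvg_mulmx K cvg_x) (entrywise_cvg_cst y).
  by apply: cvgM; exact: cvg_l2norm cvg_res.
apply: cvgM; first exact: cvg_cst.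
apply: cvg_l1norm; apply: entrywise_cvg_hadamard.
  exact: entrywise_cvg_weight.
exact: entrywise_cvg_absD.
Qed.

Lemma Jfun0 xt : J xt 0 = l2norm y ^+ 2.
Proof.
have absD0 : absD Dh Dv 0 = 0.
  by rewrite /absD !mulmx0; apply/matrixP => i j; rewrite !mxE expr0n /= addr0 sqrtr0.
have l1_had0 : l1norm (hadamard (w xt) 0) = 0.
  by rewrite /l1norm big1 // => i _; rewrite !mxE mulr0 normr0.
by rewrite /Jfun absD0 l1_had0 mulr0 addr0 mulmx0 sub0r l2normN.
Qed.

Lemma minimizer_entry_bounded {c : 'I_n -> R} :
  0 < lam -> (forall x : 'cV_n, K *m x = 0 -> Dh *m x = 0 -> Dv *m x = 0 -> x = 0) ->
  (forall i, 0 < c i) ->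
  exists M : R, forall xt x, (forall i, c i <= w xt i 0) ->
    is_minimizer_on (@nonneg_orthant R n) (J xt) x -> forall j, `|x j 0| <= M.
Proof.
move=> lam_gt0 joint_ker c_gt0.
have [C C_bound] : exists C : R, forall (x : 'cV_n) (T : R), 0 <= T ->
    (forall i, `|(col_mx K (col_mx Dh Dv) *m x) i 0| <= T) ->
    forall j, `|x j 0| <= C * T.
  apply: mx_inj_entry_bound => x; rewrite !mul_col_mx => /eqP.
  rewrite !col_mx_eq0 => /andP[/eqP Kx /andP[/eqP Dhx /eqP Dvx]].
  exact: joint_ker.
pose Y := l2norm y ^+ 2.
have D_bound_ge0 i : 0 <= Y / (lam * c i).
  by rewrite divr_ge0 ?sqr_ge0 // mulr_ge0 ?ltW.
pose T := 2 * l2norm y + \sum_i Y / (lam * c i).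
have T_ge0 : 0 <= T by rewrite addr_ge0 ?mulr_ge0 ?l2norm_ge0 ?sumr_ge0.
exists (C * T) => xt x c_le_w [_ x_min] j.
have Jx_le : J xt x <= Y by rewrite /Y -(Jfun0 xt); apply: x_min => i; rewrite mxE.
have l1_ge0 : 0 <= l1norm (hadamard (w xt) (absD Dh Dv x)) by exact: sumr_ge0.
have [fid_sq_le reg_le] : l2norm (K *m x - y) ^+ 2 <= Y /\
    lam * l1norm (hadamard (w xt) (absD Dh Dv x)) <= Y.
  have := sqr_ge0 (l2norm (K *m x - y)); have := mulr_ge0 (ltW lam_gt0) l1_ge0.
  by move: Jx_le; rewrite /Jfun; lra.
have KxT i : `|(K *m x) i 0| <= T.
  have fid_le : l2norm (K *m x - y) <= l2norm y.
    by rewrite -(ler_pXn2r (_ : 0 < 2)%N) ?nnegrE ?l2norm_ge0.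
  have := norm_entry_le_l2norm (K *m x - y) i; have := norm_entry_le_l2norm y i.
  have := ler_normD ((K *m x - y) i 0) (y i 0).
  rewrite [(K *m x - y) i 0]mxE [(- y) i 0]mxE subrK.
  have : 0 <= \sum_i Y / (lam * c i) by exact: sumr_ge0.
  rewrite /T; lra.
have absDxT i : absD Dh Dv x i 0 <= T.
  have absD_ge0 : 0 <= absD Dh Dv x i 0 by rewrite mxE sqrtr_ge0.
  have : c i * absD Dh Dv x i 0 <= l1norm (hadamard (w xt) (absD Dh Dv x)).
    apply: le_trans (norm_entry_le_l1norm _ i); rewrite [hadamard _ _ i 0]mxE.
    by apply: le_trans (ler_norm _); apply: ler_wpM2r.
  move=> /(ler_wpM2l (ltW lam_gt0)) /le_trans /(_ reg_le) reg_i.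
  apply: (@le_trans _ _ (Y / (lam * c i))).
    by rewrite ler_pdivlMr ?mulr_gt0 // mulrC -mulrA.
  apply: le_trans (@ler_sum_term R _ _ _ D_bound_ge0) _.
  by rewrite /T lerDr mulr_ge0 ?l2norm_ge0.
apply: C_bound => //; rewrite !mul_col_mx.
apply: norm_col_mx_le => // i; apply: norm_col_mx_le => {}i.
  exact: le_trans (norm_mulmx_le_absD x i).1 (absDxT i).
exact: le_trans (norm_mulmx_le_absD x i).2 (absDxT i).
Qed.

End Functional.

Theorem corollary2 (R : realType) (m n : nat) (K : 'M[R]_(m, n)) (Dh Dv : 'M[R]_n)
  (lam eta p : R) (xGT : 'cV[R]_n) (delta : R) (e y : 'cV[R]_m)
  (Psi : nat -> 'cV[R]_m -> 'cV[R]_n) (xstar : nat -> 'cV[R]_n) (xstarGT : 'cV[R]_n) :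
  (m <= n)%N ->
  0 < lam -> 0 < eta -> 0 < p -> p < 1 ->
  nonneg_orthant xGT ->
  (forall x : 'cV[R]_n, K *m x = 0 -> Dh *m x = 0 -> Dv *m x = 0 -> x = 0) ->
  0 <= delta -> y = K *m xGT + e -> l2norm e <= delta ->
  (forall k, lipschitz_map (Psi k)) ->
  ((fun k => l1norm (Psi k y - xGT)) @ \oo --> 0 \/
   (fun k => l1norm (absD Dh Dv (Psi k y) - absD Dh Dv xGT)) @ \oo --> 0) ->
  (forall k, is_unique_minimizer_on (@nonneg_orthant R n)
               (Jfun K Dh Dv lam eta p y (Psi k y)) (xstar k)) ->
  is_unique_minimizer_on (@nonneg_orthant R n) (Jfun K Dh Dv lam eta p y xGT) xstarGT ->
  exists phi : nat -> nat, (forall k, (phi k < phi k.+1)%N) /\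
    (fun k => l1norm (xstar (phi k) - xstarGT)) @ \oo --> 0.
Proof.
move=> _ lam_gt0 eta_gt0 _ _ _ joint_ker _ _ _ _ cvg_Psi xstar_min xstarGT_min.
have cvg_abs : entrywise_cvg (fun k => absD Dh Dv (Psi k y)) (absD Dh Dv xGT).
  by case: cvg_Psi => /l1norm_cvg0P //; exact: entrywise_cvg_absD.
have c_gt0 i : 0 < weight Dh Dv eta p xGT i 0 / 2 by rewrite divr_gt0 ?weight_gt0.
have [M x_bounded] :=
  minimizer_entry_bounded (eta := eta) (p := p) (y := y) lam_gt0 joint_ker c_gt0.
have [N _ w_ge] := weight_eventually_ge (p := p) eta_gt0 cvg_abs.
have [f f_incr [xbar cvg_xbar]] :=
  bounded_entrywise_cvg_subseq (u := fun k => xstar (k + N))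
    (fun k => x_bounded _ _ (w_ge _ (leq_addl k N)) (xstar_min _).1).
pose phi k := (f k + N)%N.
have phi_incr : increasing_seq phi.
  by move=> a b; rewrite /phi leEnat leq_add2r -leEnat f_incr.
have cvg_abs_phi := entrywise_cvg_comp (increasing_seq_cvg_oo phi_incr) cvg_abs.
have xbar_min : is_minimizer_on (@nonneg_orthant R n)
    (Jfun K Dh Dv lam eta p y xGT) xbar.
  apply: (is_minimizer_on_lim (x_ := xstar \o phi)
    (F_ := fun k => Jfun K Dh Dv lam eta p y (Psi (phi k) y))).
  - exact: nonneg_orthant_entrywise_lim (fun k => (xstar_min (phi k)).1.1) cvg_xbar.
  - by move=> k; exact: (xstar_min (phi k)).1.
  - exact: cvg_Jfun cvg_abs_phi cvg_xbar.
  - by move=> z _; exact: cvg_Jfun cvg_abs_phi (entrywise_cvg_cst z).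
exists phi; split; first exact: (increasing_seqP phi).2 phi_incr.
by rewrite -(xstarGT_min.2 _ xbar_min); exact/l1norm_cvg0P.
Qed.
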